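(* For every integer $R\ge 2$, the $R$-counterwall $G_R$ has no $K_6$ minor.
   Context: Let $W_e$ be the elementary wall of height $R$: from the graph with vertex set $\{1,\dots,2R\}\times\{1,\dots,R\}$, with edges $(i,j)(i+1,j)$ for $1\le i<2R$ and $(i,j)(i,j+1)$ for $1\le j<R$ with $i+j$ even, delete the vertices of degree $1$; draw it in the plane with first coordinate increasing to the right and second coordinate increasing upward. Its bricks are the facial $6$-cycles; each brick consists of a bottom path $x_1x_2x_3$ (left to right, in the lower row), a top path $y_1y_2y_3$ (left to right, in the upper row), and the vertical edges $x_1y_1$, $x_3y_3$. The $R$-counterwall $G_R$ is obtained from $W_e$ by doing the following for every brick $B$ (with $\omega_B=y_3$ its top right corner): subdivide the edge $x_2x_3$ by four new vertices $\alpha_B,\beta_B,\gamma_B,\delta_B$ appearing in this order from $x_2$ to $x_3$, and add the six edges $\omega_B\alpha_B$, $\omega_B\beta_B$, $\omega_B\gamma_B$, $\omega_B\delta_B$, $\alpha_B\gamma_B$, $\beta_B\delta_B$. (Each horizontal edge is the bottom edge of at most one brick, so this is well defined.) Each brick together with its four new vertices and six new edges is called a full brick. *)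

From mathcomp Require Import all_boot.
Set Implicit Arguments. Unset Strict Implicit. Unset Printing Implicit Defensive.

Definition induced_rel (V : finType) (e : rel V) (A : {set V}) : rel V :=
  [rel x y | [&& x \in A, y \in A & e x y]].

Definition connected_set (V : finType) (e : rel V) (A : {set V}) : Prop :=
  forall x y, x \in A -> y \in A -> connect (induced_rel e A) x y.

Definition has_clique_minor (V : finType) (S : {set V}) (e : rel V) (t : nat)
  : Prop :=
  exists B : 'I_t -> {set V},
    [/\ forall k, B k != set0,
        forall k, B k \subset S,
        forall k, connected_set e (B k),
        forall k l, k != l -> [disjoint B k & B l]
      & forall k l, k != l ->
          exists x y, [/\ x \in B k, y \in B l & e x y]].

(* The elementary wall of height R.  A grid point u : 'I_(2R) * 'I_R   *)
(* stands for the point (col u, row u) with 1 <= col u <= 2R and       *)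
(* 1 <= row u <= R (1-based, as in the paper).                         *)

Section Counterwall.
Variable R : nat.

Definition gpt := ('I_(2 * R) * 'I_R)%type.
Definition col (u : gpt) : nat := (nat_of_ord u.1).+1.
Definition row (u : gpt) : nat := (nat_of_ord u.2).+1.

Definition grid_e (u v : gpt) : bool :=
  ((row u == row v) && ((col u + 1 == col v) || (col v + 1 == col u)))
  || ((col u == col v) &&
      (((row u + 1 == row v) && ~~ odd (col u + row u))
       || ((row v + 1 == row u) && ~~ odd (col v + row v)))).

Definition grid_deg (u : gpt) : nat := #|[set v | grid_e u v]|.

Definition wall_vertex (u : gpt) : bool := grid_deg u != 1.

(* b is the bottom-left corner x1 of a brick (x1 = (i,j), bottom path
   (i,j)(i+1,j)(i+2,j), top path (i,j+1)(i+1,j+1)(i+2,j+1), vertical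
   edges at columns i and i+2, so i+j even) *)
Definition is_brick (b : gpt) : bool :=
  [&& col b + 2 <= 2 * R, row b < R & ~~ odd (col b + row b)].

Definition is_x2 (b u : gpt) : bool := (col u == col b + 1) && (row u == row b).
Definition is_x3 (b u : gpt) : bool := (col u == col b + 2) && (row u == row b).
Definition is_omega (b u : gpt) : bool :=
  (col u == col b + 2) && (row u == row b + 1).

Definition subdivided (u v : gpt) : bool :=
  [exists b, is_brick b && ((is_x2 b u && is_x3 b v) || (is_x2 b v && is_x3 b u))].

(* Vertices of G_R: wall grid points, and new vertices (b, k) for each
   brick b, with k = 0,1,2,3 standing for alpha_b, beta_b, gamma_b, delta_b. *)
Definition cvertex := (gpt + gpt * 'I_4)%type.

Definition cw_vertices : {set cvertex} :=
  [set x | match x with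
           | inl u => wall_vertex u
           | inr (b, _) => is_brick b
           end].

Definition mixed_e (u : gpt) (b : gpt) (k : 'I_4) : bool :=
  [&& wall_vertex u, is_brick b &
      [|| is_x2 b u && (nat_of_ord k == 0),
          is_x3 b u && (nat_of_ord k == 3) | is_omega b u]].

Definition cw_e (x y : cvertex) : bool :=
  match x, y with
  | inl u, inl v => [&& wall_vertex u, wall_vertex v, grid_e u v & ~~ subdivided u v]
  | inl u, inr (b, k) => mixed_e u b k
  | inr (b, k), inl u => mixed_e u b k
  | inr (b, k), inr (b', k') =>
      (* new-new edges: alpha-beta, beta-gamma, gamma-delta (the path),
         alpha-gamma, beta-delta: all pairs except alpha-delta *)
      [&& is_brick b, b == b', k != k' &
          ~~ ((nat_of_ord k + nat_of_ord k' == 3) && ((nat_of_ord k == 0) || (nat_of_ord k' == 0)))]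
  end.

End Counterwall.

From mathcomp Require Import all_boot zify.
Set Implicit Arguments. Unset Strict Implicit. Unset Printing Implicit Defensive.

(* In a K_6 model every branch set B_i contains a wall vertex: a connected set
   of new vertices of one brick has at most four neighbours, too few to meet the
   five other branch sets.  Replacing each new vertex of B_i ∪ B_j by a wall
   vertex of the same set among the corners x2, x3, ω of its brick turns walks
   inside B_i ∪ B_j into walks of the triangular lattice on ℕ² (the grid plus the
   diagonals (x, y)(x+1, y+1)).  Five branch sets thus give five points joined
   pairwise by lattice walks, the walks of disjoint pairs being vertex-disjoint.
   The lattice is planar, which is used through a parity invariant: for disjoint
   walks P from a to a' and Q from c to c', the number of crossings of P with
   the rays leaving c and c', plus those of Q with the rays leaving a and a',
   has the parity of the number of pairs (x, y) ∈ {c, c'} × {a, a'} with x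
   before y in row-major order.  This is a finite check for single edges and
   follows for walks by induction.  Summed over the 15 pairs of disjoint edges
   of K_5, the crossing terms cancel while the order terms add up to an odd
   number. *)


Section TriangularLattice.

Implicit Types (u v w a c d : nat * nat) (p q : seq (nat * nat)).

Definition tri_step u v : bool :=
  [|| v == (u.1.+1, u.2), v == (u.1, u.2.+1) | v == (u.1.+1, u.2.+1)].

Definition tri_adj u v : bool := [|| u == v, tri_step u v | tri_step v u].

Definition tri_walk (S : pred (nat * nat)) a c : Prop :=
  exists p, [/\ path tri_adj a p, last a p = c & all S (a :: p)].

(* [ray_cross u v w]: the segment [u, v] crosses the ray that leaves [w] to the
   left with an infinitesimal upward slope. *)
Definition ray_cross u v w : bool :=
  [&& u.2.+1 == v.2, u.2 == w.2 & u.1 < w.1] || [&& v.2.+1 == u.2, v.2 == w.2 & v.1 < w.1].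

Definition rowmajor_lt u w : bool := (u.2 < w.2) || (u.2 == w.2) && (u.1 < w.1).

Definition crossings w a p : nat := count id (pairmap (fun x y => ray_cross x y w) a p).

Definition walk_parity a p c q : nat :=
  crossings c a p + crossings (last c q) a p + crossings a c q + crossings (last a p) c q
  + rowmajor_lt c a + rowmajor_lt (last c q) a
  + rowmajor_lt c (last a p) + rowmajor_lt (last c q) (last a p).

Lemma ray_crossC u v w : ray_cross u v w = ray_cross v u w.
Proof. exact: orbC. Qed.

Lemma ray_cross_refl u w : ray_cross u u w = false.
Proof. by rewrite /ray_cross orbb (gtn_eqF (ltnSn _)). Qed.

Lemma rowmajor_lt_asym u w : u != w -> rowmajor_lt u w + rowmajor_lt w u = 1.
Proof. by case: u w => [u1 u2] [w1 w2]; rewrite /rowmajor_lt xpair_eqE /=; lia. Qed.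

Lemma walk_parity_edgesE u v c d : walk_parity u [:: v] c [:: d] =
  ray_cross u v c + ray_cross u v d + ray_cross c d u + ray_cross c d v
  + rowmajor_lt c u + rowmajor_lt d u + rowmajor_lt c v + rowmajor_lt d v.
Proof. by rewrite /walk_parity /crossings /= !addn0. Qed.

Lemma odd_walk_parity_consl a y p c q : odd (walk_parity a (y :: p) c q) =
  odd (walk_parity a [:: y] c q) (+) odd (walk_parity y p c q).
Proof.
rewrite -oddD (_ : _ + _ = walk_parity a (y :: p) c q
  + (crossings y c q + rowmajor_lt c y + rowmajor_lt (last c q) y).*2).
  by rewrite oddD odd_double addbF.
by rewrite /walk_parity /crossings /=; lia.
Qed.

Lemma odd_walk_parity_consr a p c z q : odd (walk_parity a p c (z :: q)) =
  odd (walk_parity a p c [:: z]) (+) odd (walk_parity a p z q).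
Proof.
rewrite -oddD (_ : _ + _ = walk_parity a p c (z :: q)
  + (crossings z a p + rowmajor_lt z a + rowmajor_lt z (last a p)).*2).
  by rewrite oddD odd_double addbF.
by rewrite /walk_parity /crossings /=; lia.
Qed.

Lemma odd_walk_parity_nill a c q : odd (walk_parity a [::] c q) = false.
Proof. rewrite /walk_parity /crossings /=; lia. Qed.

Lemma odd_walk_parity_nilr a p c : odd (walk_parity a p c [::]) = false.
Proof. rewrite /walk_parity /crossings /=; lia. Qed.

Ltac decide_nat_atoms := repeat match goal with
 | |- context [?a == ?b :> nat] =>
     first [ have -> : (a == b) = true by apply/eqP; lia
           | have -> : (a == b) = false by apply/negbTE/eqP; lia
           | case: (eqVneq a b) => ? ]
 | |- context [?a <= ?b] =>
     first [ have -> : (a <= b) = true by lia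
           | have -> : (a <= b) = false by apply/negbTE; lia
           | case: (leqP a b) => ? ]
 end.

(* Two lattice edges with four distinct ends do not cross.  Each comparison
   involved depends only on the relative position of [u] and [c], so deciding
   or splitting on them one at a time is a finite check. *)
Lemma walk_parity_steps u v c d : tri_step u v -> tri_step c d ->
  u != c -> u != d -> v != c -> v != d -> ~~ odd (walk_parity u [:: v] c [:: d]).
Proof.
rewrite walk_parity_edgesE; case: u c => [x1 x2] [y1 y2].
case/or3P=> /eqP-> /or3P[]/eqP->; rewrite /ray_cross /rowmajor_lt !xpair_eqE; cbn [fst snd].
all: rewrite ?eqSS ?ltnS ?eqxx ?(gtn_eqF (ltnSn _)) ?(gtn_eqF (leqnSn _)) /=.
all: by decide_nat_atoms.
Qed.

Lemma walk_parity_edgesCl u v c d :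
  walk_parity v [:: u] c [:: d] = walk_parity u [:: v] c [:: d].
Proof. by rewrite !walk_parity_edgesE !(ray_crossC v u); lia. Qed.

Lemma walk_parity_edgesCr u v c d :
  walk_parity u [:: v] d [:: c] = walk_parity u [:: v] c [:: d].
Proof. by rewrite !walk_parity_edgesE !(ray_crossC d c); lia. Qed.

Lemma walk_parity_edges u v c d : tri_adj u v -> tri_adj c d ->
  u != c -> u != d -> v != c -> v != d -> ~~ odd (walk_parity u [:: v] c [:: d]).
Proof.
have [<- | u_v] := eqVneq u v.
  by rewrite walk_parity_edgesE !ray_cross_refl => _ _ _ _ _ _; lia.
have [<- | c_d] := eqVneq c d.
  by rewrite walk_parity_edgesE !ray_cross_refl => _ _ _ _ _ _; lia.
rewrite /tri_adj (negbTE u_v) (negbTE c_d) /= => /orP[uv | vu] /orP[cd | dc] uc ud vc vd.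
- exact: walk_parity_steps.
- by rewrite -walk_parity_edgesCr; apply: walk_parity_steps.
- by rewrite -walk_parity_edgesCl; apply: walk_parity_steps.
- by rewrite -walk_parity_edgesCl -walk_parity_edgesCr; apply: walk_parity_steps.
Qed.

Lemma walk_parity_edge_walk u v c q : tri_adj u v -> path tri_adj c q ->
  u \notin c :: q -> v \notin c :: q -> ~~ odd (walk_parity u [:: v] c q).
Proof.
move=> uv; elim: q c => [|z q IHq] c; first by rewrite odd_walk_parity_nilr.
move=> /andP[cz zq]; rewrite in_cons negb_or => /andP[uc uzq].
rewrite in_cons negb_or => /andP[vc vzq].
have [uz vz] : u != z /\ v != z.
  by move: uzq vzq; rewrite !in_cons !negb_or => /andP[-> _] /andP[-> _].
rewrite odd_walk_parity_consr negb_add (negbTE (walk_parity_edges uv cz uc uz vc vz)).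
by rewrite (negbTE (IHq z zq uzq vzq)).
Qed.

Lemma walk_parity_even a p c q : path tri_adj a p -> path tri_adj c q ->
  {in a :: p, forall x, x \notin c :: q} -> ~~ odd (walk_parity a p c q).
Proof.
move=> + cq; elim: p a => [|y p IHp] a; first by rewrite odd_walk_parity_nill.
move=> /andP[ay yp] disj.
have disj' : {in y :: p, forall x, x \notin c :: q}.
  by move=> x xp; apply: disj; rewrite inE xp orbT.
rewrite odd_walk_parity_consl negb_add (negbTE (IHp y yp disj')).
by rewrite (negbTE (walk_parity_edge_walk ay cq (disj a (mem_head _ _)) (disj' y (mem_head _ _)))).
Qed.

Lemma tri_lattice_no_K5 (r : 'I_5 -> nat * nat) (S : 'I_5 -> 'I_5 -> pred (nat * nat)) :
  injective r -> (forall i j, i != j -> tri_walk (S i j) (r i) (r j)) ->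
  (forall i j k l, [&& i != k, i != l, j != k & j != l] -> forall x, S i j x -> ~~ S k l x) ->
  False.
Proof.
move=> r_inj walks disj.
have /fin_all_exists[w wP] : forall ij : 'I_5 * 'I_5, exists p, ij.1 != ij.2 ->
    [/\ path tri_adj (r ij.1) p, last (r ij.1) p = r ij.2 & all (S ij.1 ij.2) (r ij.1 :: p)].
  by case=> i j; case: (eqVneq i j) => [_ | /walks[p pP]]; [exists [::] | exists p].
pose X i j k := crossings (r k) (r i) (w (i, j)).
pose L i j : nat := rowmajor_lt (r i) (r j).
pose M i j k l := (X i j k + X i j l + X k l i + X k l j + L k i + L l i + L k j + L l j)./2.
have E i j k l : [&& i != j, k != l & [&& i != k, i != l, j != k & j != l]] ->
    X i j k + X i j l + X k l i + X k l j + L k i + L l i + L k j + L l j = 2 * M i j k l.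
  case/and3P=> ij kl indep; rewrite mul2n -[LHS]odd_double_half; apply/eqP.
  rewrite -[X in _ == X]add0n eqn_add2r eqb0.
  have [pij lij /allP Sij] := wP (i, j) ij; have [pkl lkl /allP Skl] := wP (k, l) kl.
  have := walk_parity_even pij pkl; rewrite /walk_parity lij lkl; apply.
  by move=> x /Sij /(disj _ _ _ _ indep); apply: contra => /Skl.
have A i j : i != j -> L i j + L j i = 1.
  by move=> ij; apply: rowmajor_lt_asym; rewrite (inj_eq r_inj).
clearbody X L M.
pose o0 := @Ordinal 5 0 isT; pose o1 := @Ordinal 5 1 isT; pose o2 := @Ordinal 5 2 isT.
pose o3 := @Ordinal 5 3 isT; pose o4 := @Ordinal 5 4 isT.
move: (E o0 o1 o2 o3 isT) (E o0 o2 o1 o3 isT) (E o0 o3 o1 o2 isT).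
move: (E o0 o1 o2 o4 isT) (E o0 o2 o1 o4 isT) (E o0 o4 o1 o2 isT).
move: (E o0 o1 o3 o4 isT) (E o0 o3 o1 o4 isT) (E o0 o4 o1 o3 isT).
move: (E o0 o2 o3 o4 isT) (E o0 o3 o2 o4 isT) (E o0 o4 o2 o3 isT).
move: (E o1 o2 o3 o4 isT) (E o1 o3 o2 o4 isT) (E o1 o4 o2 o3 isT).
move: (A o0 o1 isT) (A o0 o2 isT) (A o0 o3 isT) (A o0 o4 isT) (A o1 o2 isT).
move: (A o1 o3 isT) (A o1 o4 isT) (A o2 o3 isT) (A o2 o4 isT) (A o3 o4 isT).
lia.
Qed.

End TriangularLattice.

Section CliqueMinors.

Variables (V : finType) (e : rel V).

Definition nbhd (A : {set V}) : {set V} := [set y | (y \notin A) && [exists x in A, e x y]].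

Lemma connect_induced_setU (A B : {set V}) x y a b :
  connected_set e A -> connected_set e B -> x \in A -> y \in B -> e x y ->
  a \in A -> b \in B -> connect (induced_rel e (A :|: B)) a b.
Proof.
move=> connA connB xA yB xy aA bB.
have widen (C : {set V}) : C \subset A :|: B ->
    subrel (connect (induced_rel e C)) (connect (induced_rel e (A :|: B))).
  move=> /subsetP CAB; apply: connect_sub => z z' /and3P[zC z'C zz'].
  by apply: connect1; rewrite /induced_rel /= !CAB.
apply: connect_trans (widen _ (subsetUl A B) _ _ (connA _ _ aA xA)) _.
apply: connect_trans (widen _ (subsetUr A B) _ _ (connB _ _ yB bB)).
by apply: connect1; rewrite /induced_rel /= !inE xA yB xy orbT.
Qed.

Lemma clique_model_nbhd t (B : 'I_t -> {set V}) k :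
  (forall i j, i != j -> [disjoint B i & B j]) ->
  (forall i j, i != j -> exists x y, [/\ x \in B i, y \in B j & e x y]) ->
  t.-1 <= #|nbhd (B k)|.
Proof.
move=> disj adj; pose owner y := [pick l | y \in B l].
have sub : Some @: [set~ k] \subset owner @: nbhd (B k).
  apply/subsetP=> _ /imsetP[l lk ->]; rewrite in_setC1 eq_sym in lk.
  have [x [y [xk yl xy]]] := adj k l lk.
  apply/imsetP; exists y.
    by rewrite inE (disjointFl (disj k l lk) yl); apply/existsP; exists x; rewrite xk.
  rewrite /owner; case: pickP => [l' yl' | /(_ l)]; last by rewrite yl.
  by case: (eqVneq l l') => [-> // | /disj/disjointFr/(_ yl)]; rewrite yl'.
rewrite -(card_ord t) -(cardsC1 k) -(card_imset _ (@Some_inj _)).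
exact: leq_trans (subset_leq_card sub) (leq_imset_card _ _).
Qed.

End CliqueMinors.

Section Counterwall.

Variable R : nat.
Implicit Types (u w b : gpt R) (z : cvertex R) (U A : {set cvertex R}).

Definition pos u : nat * nat := (col u, row u).

Lemma pos_inj : injective pos.
Proof. by move=> [a b] [c d] [/val_inj-> /val_inj->]. Qed.

Definition attach b u : bool := [|| is_x2 b u, is_x3 b u | is_omega b u].

Lemma grid_tri_adj u w : grid_e u w -> tri_adj (pos u) (pos w).
Proof. rewrite /grid_e /tri_adj /tri_step /pos !xpair_eqE /=; lia. Qed.

Lemma attach_tri_adj b u w : attach b u -> attach b w -> tri_adj (pos u) (pos w).
Proof. rewrite /attach /is_x2 /is_x3 /is_omega /tri_adj /tri_step /pos !xpair_eqE /=; lia. Qed.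

Lemma mixed_attach u b k : mixed_e u b k -> attach b u.
Proof. by rewrite /attach => /and3P[_ _ /or3P[/andP[-> _] | /andP[-> _] | ->]]; rewrite ?orbT. Qed.

Definition anchored U z : bool :=
  (z \in U) && (if z is inr (b, _) then [exists u, attach b u && (inl u \in U)] else true).

(* [b] is a junk default: [shadow U z] is only used when [anchored U z]. *)
Definition shadow U z : gpt R :=
  match z with
  | inl u => u
  | inr (b, _) => odflt b [pick u | attach b u && (inl u \in U)]
  end.

Lemma shadow_inr U b k : anchored U (inr (b, k)) ->
  attach b (shadow U (inr (b, k))) && (inl (shadow U (inr (b, k))) \in U).
Proof.
case/andP=> _ /existsP[u uP] /=.
by case: pickP => [// | /(_ u)]; rewrite uP.
Qed.

Lemma shadow_mem U z : anchored U z -> inl (shadow U z) \in U.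
Proof. by case: z => [u /andP[] // | [b k] /shadow_inr/andP[]]. Qed.

Lemma anchored_closed U : closed (induced_rel (@cw_e R) U) (anchored U).
Proof.
move=> z z' /and3P[zU z'U]; rewrite ![_ \in anchored U]unfold_in /anchored zU z'U /=.
case: z z' zU z'U => [u | [b k]] [w | [b' k']] zU z'U //.
- by move/mixed_attach=> bu; apply/esym/existsP; exists u; rewrite bu.
- by move/mixed_attach=> bw; apply/existsP; exists w; rewrite bw.
- by case/and4P=> _ /eqP<-.
Qed.

Lemma shadow_adj U z z' : anchored U z -> anchored U z' -> cw_e z z' ->
  tri_adj (pos (shadow U z)) (pos (shadow U z')).
Proof.
case: z z' => [u | [b k]] [w | [b' k']] zA z'A.
- by case/and4P=> _ _ /grid_tri_adj.
- by move/mixed_attach=> bu; case/andP: (shadow_inr z'A) => bw _; apply: attach_tri_adj bu bw.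
- by move/mixed_attach=> bw; case/andP: (shadow_inr zA) => bu _; apply: attach_tri_adj bu bw.
- case/and4P=> _ /eqP eb _ _; subst b'.
  case/andP: (shadow_inr zA) => bu _; case/andP: (shadow_inr z'A) => bw _.
  exact: attach_tri_adj bu bw.
Qed.

Definition wall_shadow U : pred (nat * nat) := fun x => [exists u, (inl u \in U) && (pos u == x)].

Lemma wall_walk U u w : inl u \in U -> connect (induced_rel (@cw_e R) U) (inl u) (inl w) ->
  tri_walk (wall_shadow U) (pos u) (pos w).
Proof.
move=> uU /connectP[p p_path p_last].
have anch : all (anchored U) (inl u :: p).
  apply/allP=> z /(path_connect p_path) uz.
  rewrite -[anchored U z]/(z \in anchored U) -(closed_connect (@anchored_closed U) uz).
  by rewrite -[_ \in _]/(anchored U (inl u)) /anchored uU.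
pose f z := pos (shadow U z).
exists (map f p); split.
- apply: (homo_path_in (P := anchored U) _ anch p_path) => z z' zA z'A.
  by case/and3P=> _ _; apply: shadow_adj.
- by rewrite -[pos u]/(f (inl u)) last_map -p_last.
- rewrite -[pos u]/(f (inl u)) -map_cons; apply/allP=> _ /mapP[z zp ->].
  by apply/existsP; exists (shadow U z); rewrite eqxx andbT shadow_mem // (allP anch).
Qed.

Lemma wall_shadow_disjoint U U' x : [disjoint U & U'] -> wall_shadow U x -> ~~ wall_shadow U' x.
Proof.
move=> disj /existsP[u /andP[uU /eqP<-]]; apply/existsP=> -[w /andP[wU' /eqP/pos_inj wu]].
by rewrite wu (disjointFr disj uU) in wU'.
Qed.

Lemma wallfree_in_brick A b k0 : connected_set (@cw_e R) A -> inr (b, k0) \in A ->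
  (forall u, inl u \notin A) -> forall z, z \in A -> exists k, z = inr (b, k).
Proof.
move=> connA bA noWall z zA.
pose P := [pred z : cvertex R | if z is inr (b', _) then b' == b else false].
have closedP : closed (induced_rel (@cw_e R) A) P.
  move=> [u | [b1 k1]] [w | [b2 k2]] /and3P[xA yA]; rewrite ?(negbTE (noWall _)) // in xA yA.
  by case/and4P=> _ /eqP->.
have := closed_connect closedP (connA _ _ bA zA); rewrite !inE eqxx.
by case: z {zA} => [// | [b' k] /esym/eqP->]; exists k.
Qed.

Definition brick_slot b z : nat :=
  match z with
  | inl u => if is_x2 b u then 0 else if is_x3 b u then 1 else 2
  | inr (_, k) => k.+3
  end.

Definition near_brick b z : bool :=
  match z with inl u => attach b u | inr (b', _) => b' == b end.

Lemma brick_slot_lt b z : brick_slot b z < 7.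
Proof. by case: z => [u | [_ k]] /=; [repeat case: ifP | exact: ltn_ord k]. Qed.

Lemma brick_slot_inj b : {in near_brick b &, injective (brick_slot b)}.
Proof.
move=> [u | [b1 k1]] [w | [b2 k2]]; rewrite /near_brick /brick_slot.
- move=> ub wb slot_uw; congr inl; apply: pos_inj; move: ub wb slot_uw.
  by rewrite /attach /is_x2 /is_x3 /is_omega /pos; repeat case: ifP; move=> *; congr pair; lia.
- by move=> _ _; repeat case: ifP.
- by move=> _ _; repeat case: ifP.
- by move=> /eqP-> /eqP-> [/val_inj->].
Qed.

Definition new_adj (k j : nat) : bool := (k != j) && ~~ ((k + j == 3) && ((k == 0) || (j == 0))).

(* The slots of the neighbours of a set [{k | a k}] of new vertices of a brick:
   [0], [1], [2] stand for [x2], [x3], [omega], and [k + 3] for the [k]-th new vertex. *)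
Definition slot_ok (a : nat -> bool) (s : nat) : bool :=
  [|| (s == 0) && a 0, (s == 1) && a 3, s == 2
    | (3 <= s) && ~~ a (s - 3) && has (fun k => a k && new_adj k (s - 3)) (iota 0 4)].

Lemma slot_ok_count a : ~~ [&& a 0, ~~ a 1, ~~ a 2 & a 3] -> count (slot_ok a) (iota 0 7) <= 4.
Proof. by rewrite /slot_ok /new_adj /=; case: (a 0); case: (a 1); case: (a 2); case: (a 3). Qed.

Lemma brick_corners_distinct b u : [/\ is_x2 b u -> ~~ is_x3 b u,
  is_x2 b u -> ~~ is_omega b u & is_x3 b u -> ~~ is_omega b u].
Proof. by rewrite /is_x2 /is_x3 /is_omega; split; lia. Qed.

Lemma mixed_slot_ok (a : nat -> bool) u b (j : 'I_4) :
  a j -> mixed_e u b j -> slot_ok a (brick_slot b (inl u)).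
Proof.
move=> aj /and3P[_ _]; rewrite /slot_ok /brick_slot.
have [x2_x3 x2_om x3_om] := brick_corners_distinct b u.
case: ifP => [x2 | nx2].
  rewrite (negbTE (x2_x3 x2)) (negbTE (x2_om x2)) /= !orbF => /eqP j0.
  by move: aj; rewrite j0 => ->.
case: ifP => [x3 | //].
rewrite (negbTE (x3_om x3)) /= !orbF => /eqP j3.
by move: aj; rewrite j3 => ->.
Qed.

Lemma new_slot_ok (a : nat -> bool) (j k : nat) :
  a j -> ~~ a k -> j < 4 -> new_adj j k -> slot_ok a k.+3.
Proof.
move=> aj ak j4 jk; rewrite /slot_ok !subSS subn0 ak; apply/or4P; constructor 4.
by apply/hasP; exists j; rewrite ?mem_iota ?aj.
Qed.

Lemma brick_nbhd_card A b : connected_set (@cw_e R) A ->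
  (forall z, z \in A -> exists k, z = inr (b, k)) -> #|nbhd (@cw_e R) A| <= 4.
Proof.
move=> connA inA; pose a n := inr (b, inord n) \in A.
have aE (k : 'I_4) : a k = (inr (b, k) \in A) by rewrite /a inord_val.
have slotP y : y \in nbhd (@cw_e R) A -> slot_ok a (brick_slot b y) && near_brick b y.
  rewrite inE => /andP[yA /existsP[x /andP[xA xy]]]; have [j xj] := inA x xA; subst x.
  have aj : a j by rewrite aE.
  case: y yA xy => [u | [b' k]] yA xy.
    by rewrite (mixed_slot_ok aj xy) /= (mixed_attach xy).
  case/and4P: xy => _ /eqP eb jk adj; subst b'; rewrite /= eqxx andbT.
  by apply: new_slot_ok aj _ (ltn_ord j) _; [rewrite aE | apply/andP].
have notAD : ~~ [&& a 0, ~~ a 1, ~~ a 2 & a 3].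
  apply/and4P=> -[a0 na1 na2 a3].
  case/connectP: (connA _ _ a0 a3) => -[| z p] /=.
    by move=> _ /(congr1 (fun z => if z is inr (_, k) then val k else 0)); rewrite /= !inordK.
  case/andP=> /and3P[_ zA]; have [k zk] := inA z zA; subst z.
  have ak : a k by rewrite aE.
  case/and4P=> _ _; rewrite -val_eqE /= inordK //.
  by case: k ak {zA} => [[|[|[|[|?]]]] ?] //= ak; rewrite ak in na1 na2.
rewrite cardE -(size_map (brick_slot b)); apply: leq_trans (slot_ok_count notAD).
rewrite -size_filter; apply: uniq_leq_size.
  rewrite map_inj_in_uniq ?enum_uniq // => y y'; rewrite !mem_enum.
  by move=> /slotP/andP[_ yb] /slotP/andP[_ y'b]; apply: brick_slot_inj.
move=> s /mapP[y]; rewrite mem_enum => /slotP/andP[ok _] ->.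
by rewrite mem_filter ok mem_iota brick_slot_lt.
Qed.

Lemma branch_set_wall_vertex (B : 'I_6 -> {set cvertex R}) :
  (forall k, B k != set0) -> (forall k, connected_set (@cw_e R) (B k)) ->
  (forall k l, k != l -> [disjoint B k & B l]) ->
  (forall k l, k != l -> exists x y, [/\ x \in B k, y \in B l & cw_e x y]) ->
  forall i, exists u, inl u \in B i.
Proof.
move=> B_ne B_conn B_disj B_adj i.
have [/existsP // | /existsPn noWall] := boolP [exists u, inl u \in B i].
have /set0Pn[[u0 | [b k0]] z0B] := B_ne i; first by have := noWall u0; rewrite z0B.
by have := leq_trans (clique_model_nbhd i B_disj B_adj)
  (brick_nbhd_card (B_conn i) (wallfree_in_brick (B_conn i) z0B noWall)).
Qed.

End Counterwall.

Theorem mainTheorem8 (R : nat) :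
  2 <= R -> ~ has_clique_minor (cw_vertices R) (@cw_e R) 6.
Proof.
move=> _ [B [B_ne _ B_conn B_disj B_adj]].
have /fin_all_exists[r rB] := branch_set_wall_vertex B_ne B_conn B_disj B_adj.
pose w5 := widen_ord (leqnSn 5).
apply: (@tri_lattice_no_K5 (fun i => pos (r (w5 i)))
                            (fun i j => wall_shadow (B (w5 i) :|: B (w5 j)))).
- move=> i j /pos_inj rij; apply/eqP/contraT => ij.
  by move: (disjointFr (B_disj (w5 i) (w5 j) ij) (rB (w5 i))); rewrite rij rB.
- move=> i j ij; have [x [y [xi yj xy]]] := B_adj (w5 i) (w5 j) ij.
  by apply: wall_walk; [rewrite inE rB | apply: connect_induced_setU xy (rB _) (rB _)].
- move=> i j k l /and4P[ik il jk jl] x; apply: wall_shadow_disjoint.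
  rewrite disjoint_subset; apply/subsetP=> z; rewrite !inE negb_or => /orP[] zB.
    by rewrite (disjointFr (B_disj (w5 i) (w5 k) ik) zB) (disjointFr (B_disj (w5 i) (w5 l) il) zB).
  by rewrite (disjointFr (B_disj (w5 j) (w5 k) jk) zB) (disjointFr (B_disj (w5 j) (w5 l) jl) zB).
Qed.
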